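(* Let $k\geq 3$. For every $c>0$ there exists $q_c\in(0,1)$ such that, with probability $1-o(1)$ as $n\to\infty$, a random instance $\Phi$ of 1-in-$k$ SAT on $n$ variables with clause/variable ratio $c$ has no two satisfying assignments $A,B$ with $\mathrm{overlap}(A,B)<q_c$.
   Context: An instance of 1-in-$k$ SAT on variables $x_1,\dots,x_n$ is a conjunction of clauses, each consisting of exactly $k$ literals on $k$ distinct variables; an assignment satisfies it if in every clause exactly one literal is true. The random instance with clause/variable ratio $c$ is taken in the constant probability model: each of the $2^k\binom{n}{k}$ possible clauses is included independently with probability $2^{-k}p$, where $p\binom nk=cn$. The overlap of two assignments $A,B$ is $\mathrm{overlap}(A,B)=|\{i:A(x_i)=B(x_i)\}|/n$. *)

From mathcomp Require Import all_boot.
From Stdlib Require Import Reals.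

Set Implicit Arguments.
Unset Strict Implicit.
Unset Printing Implicit Defensive.

Definition assignment (n : nat) := {ffun 'I_n -> bool}.

(* A clause of 1-in-k SAT: on exactly k distinct variables i, a literal
   Some b (b = true: literal x_i, b = false: literal ~x_i); None means
   variable i does not occur.  There are exactly 2^k * 'C(n,k) clauses. *)
Definition clause (n k : nat) :=
  {f : {ffun 'I_n -> option bool} | #|[set i | f i != None]| == k}.

(* The literal on variable i of clause C is true under A iff C i = Some (A i). *)
Definition sat_clause (n k : nat) (A : assignment n) (C : clause n k) : bool :=
  #|[set i | sval C i == Some (A i)]| == 1.

Definition instance (n k : nat) := {set clause n k}.

Definition satisfies (n k : nat) (A : assignment n) (Phi : instance n k) : bool :=
  [forall C in Phi, sat_clause A C].

Definition overlap (n : nat) (A B : assignment n) : R :=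
  Rdiv (INR #|[set i | A i == B i]|) (INR n).

(* Constant probability model: p * 'C(n,k) = c * n, each clause included
   independently with probability 2^-k * p. *)
Definition p_of (n k : nat) (c : R) : R := Rdiv (Rmult c (INR n)) (INR 'C(n, k)).
Definition clause_prob (n k : nat) (c : R) : R :=
  Rmult (Rinv (pow 2 k)) (p_of n k c).

Definition prob (n k : nat) (c : R) (E : pred (instance n k)) : R :=
  \big[Rplus/0%R]_(Phi : instance n k)
    (if E Phi then
       \big[Rmult/1%R]_(C : clause n k)
          (if C \in Phi then clause_prob n k c else Rminus 1 (clause_prob n k c))
     else 0%R).

Definition Rltb (x y : R) : bool := if Rlt_dec x y then true else false.

Definition no_far_pair (n k : nat) (q : R) : pred (instance n k) :=
  fun Phi => ~~ [exists A : assignment n, exists B : assignment n,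
                   [&& satisfies A Phi, satisfies B Phi & Rltb (overlap A B) q]].
Arguments prob n k c E : clear implicits.
Arguments no_far_pair n k q : clear implicits.

(* If A and B both satisfy an instance and overlap(A, B) < q, let T be the set of
   variables on which they agree (|T| < q n).  No clause of the instance can have
   all its variables outside T: on such a clause A and B disagree everywhere, so
   B's true literals are exactly A's false ones and 1 = k - 1, impossible for
   k >= 3.  Hence the instance misses every clause avoiding T; there are at least
   'C(n - |T|, k) of these, so this has probability at most exp(-p 'C(n - |T|, k))
   <= exp(-g n) with g = c / 4^k.  A union bound over the sets T of size < q n,
   counted with the Chernoff weight x^|T| e^(q n / x) and x = g / 4, gives total
   probability at most exp(-g n / 2) once q <= g^2 / 16. *)

From HB Require Import structures.
From Stdlib Require Import Reals Lra Lia.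
From mathcomp Require Import all_boot zify.
Open Scope R_scope.

Set Implicit Arguments.
Unset Strict Implicit.

Lemma RplusA : associative Rplus. Proof. by move=> *; rewrite Rplus_assoc. Qed.
Lemma RmultA : associative Rmult. Proof. by move=> *; rewrite Rmult_assoc. Qed.
HB.instance Definition _ :=
  Monoid.isComLaw.Build R 0 Rplus RplusA Rplus_comm Rplus_0_l.
HB.instance Definition _ :=
  Monoid.isComLaw.Build R 1 Rmult RmultA Rmult_comm Rmult_1_l.
HB.instance Definition _ := Monoid.isMulLaw.Build R 0 Rmult Rmult_0_l Rmult_0_r.
HB.instance Definition _ :=
  Monoid.isAddLaw.Build R Rmult Rplus Rmult_plus_distr_r Rmult_plus_distr_l.

Lemma sum_le (I : finType) (P : pred I) (F G : I -> R) :
  (forall i, P i -> F i <= G i) ->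
  \big[Rplus/0]_(i | P i) F i <= \big[Rplus/0]_(i | P i) G i.
Proof.
move=> H; apply: (big_ind2 (fun x y => x <= y)) => //; first lra.
by move=> *; apply: Rplus_le_compat.
Qed.

Lemma sum_ge0 (I : finType) (P : pred I) (F : I -> R) :
  (forall i, P i -> 0 <= F i) -> 0 <= \big[Rplus/0]_(i | P i) F i.
Proof.
move=> H; apply: (big_ind (fun x => 0 <= x)) => //; first lra.
by move=> *; apply: Rplus_le_le_0_compat.
Qed.

Lemma prod_ge0 (I : finType) (F : I -> R) :
  (forall i, 0 <= F i) -> 0 <= \big[Rmult/1]_(i : I) F i.
Proof.
move=> H; apply: (big_ind (fun x => 0 <= x)) => //; first lra.
by move=> *; apply: Rmult_le_pos.
Qed.

Lemma sum_ge_term (I : finType) (P : pred I) (F : I -> R) (j : I) :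
  P j -> (forall i, P i -> 0 <= F i) -> F j <= \big[Rplus/0]_(i | P i) F i.
Proof.
move=> Pj H; rewrite (bigD1 j) //=.
suff : 0 <= \big[Rplus/0]_(i | P i && (i != j)) F i by lra.
by apply: sum_ge0 => i /andP [/H].
Qed.

Lemma prod_cond_pow (I : finType) (P : pred I) (a : R) :
  \big[Rmult/1]_(i : I) (if P i then a else 1) = a ^ #|P|.
Proof. by rewrite -big_mkcond big_const /=; elim: #|_| => //= m ->. Qed.

Lemma RltbP (x y : R) : reflect (x < y) (Rltb x y).
Proof. by rewrite /Rltb; case: Rlt_dec => h; constructor. Qed.

Lemma exp_mono a b : a <= b -> exp a <= exp b.
Proof.
case/Rle_lt_or_eq_dec => [h|->]; last exact: Rle_refl.
exact/Rlt_le/exp_increasing.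
Qed.

Lemma exp_pow_INR a m : exp a ^ m = exp (INR m * a).
Proof.
elim: m => [|m IH]; first by rewrite /= Rmult_0_l exp_0.
by rewrite [exp a ^ m.+1]/= IH -exp_plus S_INR; congr exp; ring.
Qed.

Lemma ln_ge x : 0 < x -> 1 - / x <= ln x.
Proof.
move=> hx; have h := exp_ineq1_le (ln (/ x)).
rewrite exp_ln ?ln_Rinv // in h; [lra | exact: Rinv_0_lt_compat].
Qed.

Lemma one_sub_le_exp (p : R) (m : nat) : 0 <= p <= 1 -> (1 - p) ^ m <= exp (- (p * INR m)).
Proof.
move=> hp; apply: Rle_trans (_ : exp (- p) ^ m <= _).
  by apply: pow_incr; have := exp_ineq1_le (- p); lra.
by rewrite exp_pow_INR; apply: exp_mono; lra.
Qed.

(* Chernoff weight: for j < m the weight x^j e^(m/x) is at least 1, because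
   j ln x + m/x >= j (1 - 1/x) + j/x = j. *)
Lemma small_card_weight (x m : R) (j : nat) :
  0 < x -> INR j < m -> 1 <= x ^ j * exp (m / x).
Proof.
move=> hx hj.
rewrite -(exp_ln (x ^ j)); last exact: pow_lt.
rewrite ln_pow // -exp_plus -exp_0.
apply: exp_mono.
have hl := ln_ge hx; have hj0 := pos_INR j.
have hxi : 0 < / x by apply: Rinv_0_lt_compat.
have : INR j * (1 - / x) <= INR j * ln x by apply: Rmult_le_compat_l.
have : INR j * / x <= m * / x by apply: Rmult_le_compat_r; lra.
rewrite /Rdiv; nra.
Qed.

(* e^(-a) < 1/a for a > 0, from e^a >= 1 + a. *)
Lemma exp_neg_lt a : 0 < a -> exp (- a) < / a.
Proof.
move=> ha; rewrite exp_Ropp; apply: Rinv_lt_contravar; last first.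
  by have := exp_ineq1_le a; lra.
by apply: Rmult_lt_0_compat => //; apply: exp_pos.
Qed.

(* The random subset S of a finite type T containing each element independently
   with probability p: weight S is the probability of S, mass E that of an event E.
   Instances of the constant probability model are such random subsets of the
   type of clauses, and prob is mass with p = clause_prob (by definition). *)
Section RandomSubset.
Variables (T : finType) (p : R).

Definition weight (S : {set T}) : R :=
  \big[Rmult/1]_(x : T) (if x \in S then p else 1 - p).

Definition mass (E : pred {set T}) : R :=
  \big[Rplus/0]_(S : {set T}) (if E S then weight S else 0).

Lemma sum_subsets_prod (f : T -> bool -> R) :
  \big[Rplus/0]_(S : {set T}) \big[Rmult/1]_(x : T) f x (x \in S) =
  \big[Rmult/1]_(x : T) (f x true + f x false).
Proof.
transitivity (\big[Rmult/1]_(x : T) \big[Rplus/0]_(b : bool) f x b); last first.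
  by apply: eq_bigr => x _; rewrite big_bool.
rewrite (bigA_distr_bigA (fun x b => f x b)).
rewrite (reindex (fun g : {ffun T -> bool} => [set x | g x])) /=.
  by apply: eq_bigr => g _; apply: eq_bigr => x _; rewrite inE.
exists (fun S : {set T} => [ffun x => x \in S]) => [g _ | S _].
  by apply/ffunP => x; rewrite ffunE inE.
by apply/setP => x; rewrite inE ffunE.
Qed.

Lemma sum_pow_card (a : R) :
  \big[Rplus/0]_(S : {set T}) a ^ #|S| = (a + 1) ^ #|T|.
Proof.
rewrite -[(a + 1) ^ _]prod_cond_pow -(sum_subsets_prod (fun _ b => if b then a else 1)).
by apply: eq_bigr => S _; rewrite prod_cond_pow.
Qed.

Lemma mass_total : mass predT = 1.
Proof.
rewrite /mass /weight (sum_subsets_prod (fun _ b => if b then p else 1 - p)).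
by apply: big1 => x _; lra.
Qed.

Lemma mass_compl (E : pred {set T}) : mass E = 1 - mass (predC E).
Proof.
suff : mass predT = mass E + mass (predC E) by rewrite mass_total; lra.
rewrite /mass -big_split /=.
by apply: eq_bigr => S _; rewrite /= /predC /=; case: (E S) => /=; lra.
Qed.

Hypothesis p01 : 0 <= p <= 1.

Lemma weight_ge0 (S : {set T}) : 0 <= weight S.
Proof. by apply: prod_ge0 => x; case: ifP => _; lra. Qed.

Lemma mass_union (I : finType) (P : pred I) (E : pred {set T})
    (F : I -> pred {set T}) :
  (forall S, E S -> exists2 i, P i & F i S) ->
  mass E <= \big[Rplus/0]_(i | P i) mass (F i).
Proof.
move=> cover; rewrite /mass exchange_big /=.
apply: sum_le => S _; case: ifP => [/cover [i Pi FiS] | _]; last first.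
  by apply: sum_ge0 => i _; case: ifP => _; [apply: weight_ge0 | lra].
apply: Rle_trans (sum_ge_term Pi _); first by rewrite FiS; apply: Rle_refl.
by move=> j _; case: ifP => _; [apply: weight_ge0 | lra].
Qed.
End RandomSubset.

Lemma mass_avoid (T : finType) (p : R) (Q : pred T) :
  mass p (fun S => [forall x in S, ~~ Q x]) = (1 - p) ^ #|Q|.
Proof.
pose f x b := if b then (if Q x then 0 else p) else 1 - p.
have -> : (1 - p) ^ #|Q| = \big[Rmult/1]_(x : T) (f x true + f x false).
  by rewrite -prod_cond_pow; apply: eq_bigr => x _; rewrite /f; case: (Q x); lra.
rewrite -sum_subsets_prod; apply: eq_bigr => S _.
case: forall_inP => [noQ | someQ].
  by apply: eq_bigr => x _; rewrite /f; case: ifP => // /noQ /negbTE ->.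
have [x /andP [xS Qx]] : exists x, (x \in S) && Q x.
  case: (boolP [exists x, (x \in S) && Q x]) => [/existsP // | /existsPn none].
  by case: someQ => x xS; have := none x; rewrite xS.
by rewrite (bigD1 x) //= /f xS Qx Rmult_0_l.
Qed.

Lemma small_sets_sum (V : finType) (m x B : R) (F : {set V} -> R) :
  0 < x -> 0 <= B -> (forall S : {set V}, INR #|S| < m -> 0 <= F S <= B) ->
  \big[Rplus/0]_(S : {set V} | Rltb (INR #|S|) m) F S <= B * ((x + 1) ^ #|V| * exp (m / x)).
Proof.
move=> hx hB hF.
have hw (S : {set V}) : 0 <= x ^ #|S| * exp (m / x).
  by apply: Rmult_le_pos; [apply: pow_le; lra | apply: Rlt_le; apply: exp_pos].
apply: Rle_trans (_ : \big[Rplus/0]_(S : {set V}) (B * (x ^ #|S| * exp (m / x))) <= _).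
  rewrite big_mkcond; apply: sum_le => S _.
  case: RltbP => [hS | _]; last by have := hw S; nra.
  by have := small_card_weight hx hS; have := hF S hS; nra.
by rewrite -big_distrr -big_distrl /= sum_pow_card; apply: Rle_refl.
Qed.

Section BinomialEstimates.
Local Open Scope nat_scope.

Lemma ffact_ge_exp m k j : k <= j -> (m - j) ^ k <= m ^_ k.
Proof.
elim: k => [|k IH] hkj; first by rewrite expn0 ffactn0.
rewrite ffactnSr expnS mulnC leq_mul //; first exact: IH (ltnW hkj).
exact/leq_sub2l/ltnW.
Qed.

Lemma ffact_le_exp m k : m ^_ k <= m ^ k.
Proof.
elim: k => [|k IH]; first by rewrite expn0 ffactn0.
by rewrite ffactnSr expnSr leq_mul // leq_subr.
Qed.

Lemma bin_sub_ratio n j k : n <= 2 * (n - j - k) -> 'C(n, k) <= 2 ^ k * 'C(n - j, k).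
Proof.
move=> h; rewrite -(leq_pmul2r (fact_gt0 k)) -mulnA !bin_ffact.
apply: leq_trans (ffact_le_exp n k) _.
apply: leq_trans (_ : (2 * (n - j - k)) ^ k <= _).
  by case: k h => [|k] h; rewrite ?expn0 // leq_exp2r.
by rewrite expnMn leq_mul2l (ffact_ge_exp _ (leqnn k)) orbT.
Qed.

Lemma bin_ge_square n k : 3 <= k -> 2 * k <= n -> n * n <= 2 ^ k * k`! * 'C(n, k).
Proof.
move=> hk hn; have n0 : 0 < n by lia.
rewrite -mulnA [k`! * _]mulnC bin_ffact.
apply: leq_trans (_ : (2 * (n - k)) ^ k <= _); last first.
  by rewrite expnMn leq_mul2l ffact_ge_exp ?orbT.
apply: leq_trans (_ : n ^ k <= _); last by rewrite leq_exp2r; lia.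
by rewrite -[n * n]/(n ^ 2) leq_pexp2l // ltnW.
Qed.
End BinomialEstimates.

Section OneInK.
Variables n k : nat.

Definition agree (A B : assignment n) : {set 'I_n} := [set i | A i == B i].

Definition avoids (T : {set 'I_n}) (C : clause n k) : bool :=
  [forall i, (sval C i != None) ==> (i \notin T)].

(* Combinatorial core, needs k >= 3: if A and B both satisfy C exactly once and
   disagree on every variable of C, then B's true literals are exactly A's false
   ones, so 1 = k - 1. *)
Lemma sat_pair_meets_agree (A B : assignment n) (C : clause n k) :
  (2 < k)%N -> sat_clause A C -> sat_clause B C -> ~~ avoids (agree A B) C.
Proof.
move=> hk sA sB; apply/negP => hav.
set S := [set i | sval C i != None].
have cardS : #|S| = k by apply/eqP; exact: (svalP C).
set SA := [set i | sval C i == Some (A i)].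
have SB : [set i | sval C i == Some (B i)] = S :\: SA.
  apply/setP => i; rewrite !inE.
  have := forallP hav i; rewrite inE.
  case: (sval C i) => [b|] //= /implyP disagree.
  have hAB : (A i == B i) = false by apply/negbTE/negP => /disagree.
  by case: (A i) (B i) b hAB => [] [] [].
have SAS : SA \subset S by apply/subsetP => i; rewrite !inE => /eqP ->.
move: sB sA; rewrite /sat_clause SB cardsD (setIidPr SAS) cardS -/SA.
by move=> /eqP h /eqP hA; rewrite hA in h; lia.
Qed.

Lemma far_pair_agree (q : R) (Phi : instance n k) :
  (2 < k)%N -> (0 < n)%N -> ~~ no_far_pair n k q Phi ->
  exists2 T : {set 'I_n}, INR #|T| < q * INR n & [forall C in Phi, ~~ avoids T C].
Proof.
move=> hk hn; rewrite negbK => /existsP [A /existsP [B /and3P [sA sB /RltbP far]]].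
exists (agree A B).
  have hn' : 0 < INR n by apply/lt_0_INR/ltP.
  have := Rmult_lt_compat_r (INR n) _ _ hn' far.
  by rewrite /overlap /Rdiv Rmult_assoc Rinv_l ?Rmult_1_r //; lra.
apply/forall_inP => C CPhi; apply: sat_pair_meets_agree => //.
  exact: (forall_inP sA C CPhi).
exact: (forall_inP sB C CPhi).
Qed.

(* Each k-subset of the complement of T, with all literals positive, is a
   clause avoiding T. *)
Lemma card_avoids (T : {set 'I_n}) :
  ('C(n - #|T|, k) <= #|avoids T|)%N.
Proof.
pose D := [set U : {set 'I_n} | U \subset ~: T & #|U| == k].
have cardD : #|D| = 'C(n - #|T|, k).
  by rewrite cards_draws; congr 'C(_, _); rewrite cardsCs setCK card_ord.
pose mk (U : {set 'I_n}) : {ffun 'I_n -> option bool} :=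
  [ffun i => if i \in U then Some true else None].
have mk_inj : {in D &, injective mk}.
  move=> U V _ _ /ffunP eqUV; apply/setP => i.
  by have := eqUV i; rewrite /mk !ffunE; case: (i \in U); case: (i \in V).
rewrite -cardD -(card_in_imset mk_inj).
rewrite -(card_imset (avoids T) val_inj).
apply/subset_leq_card/subsetP => f /imsetP [U]; rewrite inE => /andP [UT /eqP Uk] ->.
have mkU : #|[set i | mk U i != None]| == k.
  by apply/eqP; rewrite -Uk; apply: eq_card => i; rewrite !inE /mk ffunE; case: (i \in U).
apply/imsetP; exists (exist _ (mk U) mkU) => //.
rewrite unfold_in /avoids; apply/forallP => i /=; apply/implyP.
rewrite /mk ffunE; case: ifP => // iU _.
by have := subsetP UT i iU; rewrite inE.
Qed.
End OneInK.

Lemma far_pair_mass (n k : nat) (c q x g : R) :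
  (2 < k)%N -> (0 < n)%N -> 0 <= clause_prob n k c <= 1 -> 0 < x ->
  (forall T : {set 'I_n}, INR #|T| < q * INR n ->
     g * INR n <= clause_prob n k c * INR 'C(n - #|T|, k)) ->
  mass (clause_prob n k c) (predC (no_far_pair n k q))
    <= exp (- (g * INR n)) * ((x + 1) ^ n * exp (q * INR n / x)).
Proof.
move=> hk hn hp hx dense.
apply: Rle_trans (mass_union (P := fun T : {set 'I_n} => Rltb (INR #|T|) (q * INR n))
  (F := fun T Phi => [forall C in Phi, ~~ avoids T C]) hp _) _.
  by move=> Phi /far_pair_agree [] // T /RltbP small met; exists T.
rewrite -[in (x + 1) ^ n](card_ord n); apply: small_sets_sum => //.
  exact/Rlt_le/exp_pos.
move=> T small; rewrite mass_avoid; split; first by apply: pow_le; lra.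
apply: Rle_trans (one_sub_le_exp _ hp) _; apply: exp_mono.
apply/Ropp_le_contravar/(Rle_trans _ _ _ (dense T small)).
apply: Rmult_le_compat_l (proj1 hp) _.
by apply: le_INR; apply/leP; apply: card_avoids.
Qed.

Lemma INR_expn (a m : nat) : INR (a ^ m)%N = INR a ^ m.
Proof. by elim: m => [|m IH]; rewrite ?expn0 // expnS mult_INR IH. Qed.

Lemma clause_prob_unit (n k : nat) (c : R) :
  (3 <= k)%N -> (2 * k <= n)%N -> 0 < c -> c * INR k`! <= INR n ->
  0 <= clause_prob n k c <= 1.
Proof.
move=> hk hkn hc large.
have hC : 0 < INR 'C(n, k) by apply/lt_0_INR/ltP; rewrite bin_gt0; lia.
have h2k : 0 < 2 ^ k by apply: pow_lt; lra.
have hn : 0 <= INR n := pos_INR n.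
have hf : 0 < INR k`! by apply/lt_0_INR/ltP/fact_gt0.
have square : INR n * INR n <= 2 ^ k * INR k`! * INR 'C(n, k).
  by have := le_INR _ _ (leP (bin_ge_square hk hkn)); rewrite !mult_INR INR_expn.
have cn : c * INR n <= 2 ^ k * INR 'C(n, k).
  apply: (Rmult_le_reg_r (INR k`!)) => //; nra.
rewrite /clause_prob /p_of; split.
  apply/Rlt_le/Rmult_lt_0_compat; first exact: Rinv_0_lt_compat.
  have hn0 : 0 < INR n by apply/lt_0_INR/ltP; lia.
  by apply: Rdiv_lt_0_compat => //; apply: Rmult_lt_0_compat.
rewrite Rmult_comm /Rdiv Rmult_assoc -Rinv_mult.
apply: (Rmult_le_reg_r (INR 'C(n, k) * 2 ^ k)); first nra.
rewrite Rmult_assoc Rinv_l; nra.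
Qed.

Definition density (k : nat) (c : R) : R := c / (2 ^ k * 2 ^ k).
Definition threshold (k : nat) (c : R) : R :=
  Rmin (1 / 4) (density k c * density k c / 16).

Lemma density_pos k c : 0 < c -> 0 < density k c.
Proof.
by move=> hc; apply: Rdiv_lt_0_compat => //; apply: Rmult_lt_0_compat; apply: pow_lt; lra.
Qed.

Lemma clause_prob_dense (n k j : nat) (c : R) :
  (4 * j < n)%N -> (4 * k < n)%N -> 0 < c ->
  density k c * INR n <= clause_prob n k c * INR 'C(n - j, k).
Proof.
move=> hj hk hc; rewrite /density.
have ratio : INR 'C(n, k) <= 2 ^ k * INR 'C(n - j, k).
  have := le_INR _ _ (leP (@bin_sub_ratio n j k ltac:(lia))).
  by rewrite mult_INR INR_expn.
have hC : 0 < INR 'C(n, k) by apply/lt_0_INR/ltP; rewrite bin_gt0; lia.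
have h2k : 0 < 2 ^ k by apply: pow_lt; lra.
have hn : 0 <= INR n := pos_INR n.
have -> : clause_prob n k c * INR 'C(n - j, k) =
          c * INR n / (2 ^ k * 2 ^ k) * (2 ^ k * INR 'C(n - j, k) / INR 'C(n, k)).
  by rewrite /clause_prob /p_of; field; lra.
rewrite (_ : c / (2 ^ k * 2 ^ k) * INR n = c * INR n / (2 ^ k * 2 ^ k) * 1);
  last by field; lra.
apply: Rmult_le_compat_l.
  by apply: Rmult_le_pos; [nra | apply/Rlt_le/Rinv_0_lt_compat; nra].
rewrite /Rdiv.
apply: (Rmult_le_reg_r (INR 'C(n, k))) => //.
by rewrite Rmult_assoc Rinv_l; lra.
Qed.

Lemma first_moment_exponent (g q : R) (n : nat) :
  0 < g -> q <= g * g / 16 ->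
  exp (- (g * INR n)) * ((g / 4 + 1) ^ n * exp (q * INR n / (g / 4)))
    <= exp (- (g * INR n / 2)).
Proof.
move=> hg hq; have hn := pos_INR n.
have growth : (g / 4 + 1) ^ n <= exp (INR n * (g / 4)).
  by rewrite -exp_pow_INR; apply: pow_incr; have := exp_ineq1_le (g / 4); lra.
have shrink : q * INR n / (g / 4) <= g * INR n / 4.
  apply: (Rmult_le_reg_r (g / 4)); first lra.
  by rewrite /Rdiv Rmult_assoc Rinv_l; nra.
apply: Rle_trans (_ : exp (- (g * INR n)) * (exp (INR n * (g / 4)) * exp (g * INR n / 4)) <= _).
  apply: Rmult_le_compat_l; first exact/Rlt_le/exp_pos.
  apply: Rmult_le_compat => //; last exact: exp_mono.
    by apply: pow_le; lra.
  exact/Rlt_le/exp_pos.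
by rewrite -!exp_plus; apply: exp_mono; lra.
Qed.

Lemma far_pair_unlikely (n k : nat) (c : R) :
  (3 <= k)%N -> 0 < c -> (4 * k < n)%N -> c * INR k`! <= INR n ->
  mass (clause_prob n k c) (predC (no_far_pair n k (threshold k c)))
    <= exp (- (density k c * INR n / 2)).
Proof.
move=> hk hc hkn large.
have hg := density_pos k hc.
have [q_quarter q_small] := (Rmin_l (1 / 4) (density k c * density k c / 16),
                              Rmin_r (1 / 4) (density k c * density k c / 16)).
apply: Rle_trans (first_moment_exponent n hg q_small).
apply: far_pair_mass; [lia | lia | apply: clause_prob_unit; lia + done | lra |].
move=> T; move: #|T| => j small; apply: clause_prob_dense => //.
apply/ltP/INR_lt; rewrite mult_INR /=.
have : threshold k c * INR n <= 1 / 4 * INR n by apply/Rmult_le_compat_r/q_quarter/pos_INR.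
move=> ?; lra.
Qed.

Lemma exp_tail_le (a eps : R) : 0 < a -> 1 <= eps * a -> exp (- a) <= eps.
Proof.
move=> ha big; apply/Rlt_le/(Rlt_le_trans _ _ _ (exp_neg_lt ha)).
apply: (Rmult_le_reg_r a) => //; rewrite Rinv_l; lra.
Qed.

Theorem theorem3 (k : nat) (hk : (leq 3 k)) (c : R) (hc : 0 < c) :
  exists qc : R, 0 < qc < 1 /\
    forall eps : R, 0 < eps ->
      exists N : nat, forall n : nat, (leq N n) ->
        1 - eps <= prob n k c (no_far_pair n k qc).
Proof.
have hg := density_pos k hc; set g := density k c in hg *.
exists (threshold k c); split.
  have := Rmin_l (1 / 4) (g * g / 16); rewrite /threshold -/g => quarter.
  by split; [apply: Rmin_pos; nra | lra].
move=> eps heps.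
pose bound := Rmax (INR (4 * k)) (Rmax (c * INR k`!) (2 / (g * eps))).
have [N hN] := INR_unbounded bound.
exists N => n hn; have n_large : bound < INR n by have := le_INR _ _ (leP hn); lra.
have := Rmax_l (INR (4 * k)) (Rmax (c * INR k`!) (2 / (g * eps))).
have := Rmax_r (INR (4 * k)) (Rmax (c * INR k`!) (2 / (g * eps))).
have := Rmax_l (c * INR k`!) (2 / (g * eps)); have := Rmax_r (c * INR k`!) (2 / (g * eps)).
rewrite -/bound => eps_bound fact_bound rest_bound k_bound.
have hkn : (4 * k < n)%N by apply/ltP/INR_lt; lra.
rewrite [prob _ _ _ _]mass_compl; apply/Rplus_le_compat_l/Ropp_le_contravar.
apply: Rle_trans (far_pair_unlikely hk hc hkn ltac:(lra)) _.
rewrite -/g; apply: exp_tail_le; first by have := pos_INR (4 * k); move=> ?; nra.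
have : g * eps * (2 / (g * eps)) < g * eps * INR n by apply: Rmult_lt_compat_l; [nra | lra].
rewrite (_ : g * eps * (2 / (g * eps)) = 2); first by move=> ?; lra.
by field; split; lra.
Qed.
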